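(* Let $A \in \{0,1\}^{X\times Y}$ be a combinatorial channel and let $t \in \mathbb{R}^Y$ with $t \ge \mathbf{0}$ and $(At)_x > 0$ for all $x \in X$. Let $d \in \mathbb{R}$ and define $X_- = \{x \in X : (At)_x < d\}$ and $X_0 = \{x \in X : (At)_x = d\}$. Suppose \[ \mathbf{1}_{X_-}^T A t \ \le\ \mathbf{1}^T t \ \le\ (\mathbf{1}_{X_-} + \mathbf{1}_{X_0})^T A t. \] Define $z \in \mathbb{R}^Y$ by \[ z_y = t_y\left(\frac{1}{d} + \sum_{x \in N(y)} \max\left(\frac{1}{(At)_x} - \frac{1}{d},\ 0\right)\right). \] Then $z$ is feasible for $\kappa^*(A)$ (i.e. $z \ge \mathbf{0}$ and $Az \ge \mathbf{1}$), $p^*_{\textsc{dsu}}(A,t) = \mathbf{1}^T z$, and $\varphi_A(t) \le z$ entrywise. Consequently $\kappa^*_{\textsc{ldu}}(A,t) \le p^*_{\textsc{dsu}}(A,t)$.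
   Context: A combinatorial channel is a matrix $A \in \{0,1\}^{X\times Y}$ ($X,Y$ finite) in which every row and column contains a $1$. For $y \in Y$, $N(y) = \{x : A_{x,y}=1\}$. For $S \subseteq X$, $\mathbf{1}_S$ is its indicator vector. $\kappa^*(A) = \min\{\mathbf{1}^T z : z\ge \mathbf{0},\ Az \ge \mathbf{1}\}$. The degree sequence bound is $p^*_{\textsc{dsu}}(A,t) = \max\{\mathbf{1}^T w : w \in \mathbb{R}^X,\ \mathbf{0} \le w \le \mathbf{1},\ t^T A^T w \le t^T \mathbf{1}\}$. For $t$ with $At > \mathbf{0}$, $\varphi_A(t)_y = t_y / \min_{x \in N(y)} (At)_x$, and the local degree upper bound is $\kappa^*_{\textsc{ldu}}(A,t) = \mathbf{1}^T \varphi_A(t)$. *)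

From HB Require Import structures.
From mathcomp Require Import all_boot all_order all_algebra.
From mathcomp Require Import classical_sets reals.
Set Implicit Arguments. Unset Strict Implicit. Unset Printing Implicit Defensive.
Import Order.TTheory GRing.Theory Num.Theory.
Local Open Scope ring_scope.
Local Open Scope classical_set_scope.

Section Channel.
Variables (R : realType) (X Y : finType).

Definition is_channel (A : X -> Y -> bool) : Prop :=
  (forall x, exists y, A x y) /\ (forall y, exists x, A x y).

Definition Amul (A : X -> Y -> bool) (t : Y -> R) (x : X) : R :=
  \sum_(y : Y) (A x y)%:R * t y.

Definition Nbr (A : X -> Y -> bool) (y : Y) : set X := [set x | A x y].

Definition kappa_feasible (A : X -> Y -> bool) (z : Y -> R) : Prop :=
  (forall y, 0 <= z y) /\ (forall x, 1 <= Amul A z x).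

Definition dsu_feasible (A : X -> Y -> bool) (t : Y -> R) (w : X -> R) : Prop :=
  (forall x, 0 <= w x <= 1) /\
  \sum_(x : X) w x * Amul A t x <= \sum_(y : Y) t y.

Definition p_dsu (A : X -> Y -> bool) (t : Y -> R) : R :=
  sup [set \sum_(x : X) w x | w in dsu_feasible A t].

Definition phi (A : X -> Y -> bool) (t : Y -> R) (y : Y) : R :=
  t y / inf [set Amul A t x | x in Nbr A y].

Definition kappa_ldu (A : X -> Y -> bool) (t : Y -> R) : R :=
  \sum_(y : Y) phi A t y.

End Channel.

(* With a := A t, every column y of row x carries at least
   t_y (1/d + max(1/a_x - 1/d, 0)) >= t_y / a_x in z, so (A z)_x >= 1 and
   z dominates phi_A(t).  Exchanging sums,
   1^T z = 1^T t / d + sum_{a_x < d} (1 - a_x / d).  This is also the value of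
   the degree sequence LP: every feasible w satisfies
   w_x <= w_x a_x / d + [a_x < d] (1 - a_x / d), and the bound is attained by
   w = 1_{X_-} + l 1_{X_0}, where the sandwich hypothesis lets l in [0,1] fill
   the gap 1^T t - 1_{X_-}^T A t exactly.  The sandwich also forces d > 0
   unless X, and hence Y, is empty. *)
From HB Require Import structures.
From mathcomp Require Import all_boot all_order all_algebra.
From mathcomp Require Import classical_sets reals.
From mathcomp Require Import ring lra.

Set Implicit Arguments.
Unset Strict Implicit.
Unset Printing Implicit Defensive.
Import Order.TTheory GRing.Theory Num.Theory.
Local Open Scope ring_scope.

Lemma le_add_max_sub (R : realDomainType) (a b : R) :
  a <= b + Num.max (a - b) 0.
Proof. by rewrite -lerBlDl le_max lexx. Qed.

Lemma sum_indicator (R : pzSemiRingType) (I : finType) (P : pred I)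
    (F : I -> R) :
  \sum_(i : I) (P i)%:R * F i = \sum_(i | P i) F i.
Proof.
rewrite [RHS]big_mkcond; apply: eq_bigr => i _.
by case: (P i); rewrite ?mul1r ?mul0r.
Qed.

Lemma exists_unit_scale (R : realFieldType) (b c : R) :
  0 <= b <= c -> exists2 l, 0 <= l <= 1 & l * c = b.
Proof.
move=> /andP[b_ge0 b_le_c]; have [c0|c_neq0] := eqVneq c 0.
  by exists 0; rewrite ?lexx ?ler01 // mul0r; apply/le_anti; rewrite b_ge0 -c0.
have c_gt0 : 0 < c by rewrite lt_neqAle eq_sym c_neq0 (le_trans b_ge0).
exists (b / c); last by rewrite divfK.
by rewrite divr_ge0 ?(ltW c_gt0) //= ler_pdivrMr // mul1r.
Qed.

Lemma dsu_weight_le (R : realFieldType) (w a d : R) :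
  0 < d -> 0 <= w <= 1 -> w <= w * a / d + ((a < d)%R)%:R * (1 - a / d).
Proof.
move=> d_gt0 /andP[w_ge0 w_le1]; rewrite -mulrA.
case: ltP => [a_lt_d|d_le_a].
  have : a / d < 1 by rewrite ltr_pdivrMr // mul1r.
  rewrite mul1r; nra.
have : 1 <= a / d by rewrite ler_pdivlMr // mul1r.
rewrite mul0r addr0; nra.
Qed.

Lemma sup_eq_max (R : realType) (S : set R) (m : R) :
  S m -> (forall s, S s -> s <= m) -> sup S = m.
Proof.
move=> Sm ub; apply/le_anti/andP; split; first by apply: ge_sup; [exists m|].
by apply: ub_le_sup => //; exists m.
Qed.

Lemma exists_le_inf_image (R : realType) (T : finType) (P : pred T)
    (f : T -> R) (x1 : T) :
  P x1 -> exists2 x0, P x0 & f x0 <= inf [set f x | x in [set x | P x]].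
Proof.
move=> Px1; case: (arg_minP f Px1) => x0 Px0 x0_min; exists x0 => //.
by apply: lb_le_inf => [|_ [x Px <-]]; [exists (f x0), x0 | exact: x0_min].
Qed.

Section ThresholdCover.
Variables (R : realType) (X Y : finType) (A : X -> Y -> bool) (t : Y -> R).
Variable d : R.
Hypothesis t_ge0 : forall y, 0 <= t y.
Hypothesis At_gt0 : forall x, 0 < Amul A t x.

Local Notation a := (Amul A t).

Definition slack (x : X) : R := Num.max ((a x)^-1 - d^-1) 0.

Definition threshold_cover (y : Y) : R :=
  t y * (d^-1 + \sum_(x | A x y) slack x).

Definition threshold_value : R :=
  (\sum_y t y) / d + \sum_(x | a x < d) (1 - a x / d).

Definition threshold_sandwich : Prop :=
  \sum_(x | a x < d) a x <= \sum_y t y <=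
    \sum_(x | a x < d) a x + \sum_(x | a x == d) a x.

Local Notation z := threshold_cover.

Lemma slack_ge0 x : 0 <= slack x.
Proof. by rewrite le_max lexx orbT. Qed.

Lemma AmulE x : a x = \sum_(y | A x y) t y.
Proof. exact: sum_indicator. Qed.

Lemma threshold_cover_ge_row x y : A x y -> t y * (d^-1 + slack x) <= z y.
Proof.
move=> Axy; rewrite ler_wpM2l // lerD2l (bigD1 x) //= lerDl.
by apply: sumr_ge0 => *; exact: slack_ge0.
Qed.

Lemma threshold_cover_ge_ratio x y : A x y -> t y / a x <= z y.
Proof.
move=> Axy; apply: le_trans _ (threshold_cover_ge_row Axy).
by rewrite ler_wpM2l //; exact: le_add_max_sub.
Qed.

Lemma threshold_cover_feasible : 0 <= d -> kappa_feasible A z.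
Proof.
move=> d_ge0; split=> [y|x].
  by apply/mulr_ge0/addr_ge0/sumr_ge0 => // *; rewrite ?invr_ge0 ?slack_ge0.
have row_lb : 1 <= a x * (d^-1 + slack x).
  rewrite -(mulfV (lt0r_neq0 (At_gt0 x))) ler_wpM2l ?(ltW (At_gt0 x)) //.
  exact: le_add_max_sub.
apply: le_trans row_lb _.
rewrite AmulE mulr_suml /Amul -sum_indicator; apply: ler_sum => y _.
by case: (boolP (A x y)) => Axy; rewrite ?mul1r ?mul0r ?threshold_cover_ge_row.
Qed.

Lemma phi_le_threshold_cover y : (exists x, A x y) -> phi A t y <= z y.
Proof.
case=> x1 /(exists_le_inf_image (P := A^~ y) a) [x0 Ax0 x0_le_inf].
apply: le_trans _ (threshold_cover_ge_ratio Ax0).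
rewrite ler_wpM2l // lef_pV2 ?posrE //.
exact: lt_le_trans (At_gt0 x0) x0_le_inf.
Qed.

Lemma threshold_gt0 (x1 : X) : threshold_sandwich -> 0 < d.
Proof.
move=> /andP[_ T_le]; rewrite ltNge; apply/negP => d_le0.
have below_d x : (a x < d) = false.
  by apply/negbTE; rewrite -leNgt (le_trans d_le0) ?ltW.
have at_d x : (a x == d) = false by rewrite gt_eqF ?(le_lt_trans d_le0).
move: T_le; rewrite (big_pred0 _ _ _ _ below_d) (big_pred0 _ _ _ _ at_d).
rewrite addr0 => T_le0.
have /psumr_eq0P t_eq0 : \sum_y t y = 0.
  by apply/le_anti; rewrite T_le0 sumr_ge0.
have := At_gt0 x1; rewrite /Amul big1 ?ltxx // => y _.
by rewrite t_eq0 ?mulr0.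
Qed.

Lemma p_dsu_eq0 : (X -> False) -> p_dsu A t = 0.
Proof.
move=> X_empty; have sumX0 (F : X -> R) : \sum_x F x = 0.
  by apply: big1 => x; case: (X_empty x).
apply: sup_eq_max => [|_ [w _ <-]]; last by rewrite sumX0.
exists (fun _ => 0); last by rewrite sumX0.
by split=> [x|]; rewrite ?lexx ?ler01 // sumX0 sumr_ge0.
Qed.

Hypothesis d_gt0 : 0 < d.

Lemma slack_mulr x : slack x * a x = ((a x < d)%R)%:R * (1 - a x / d).
Proof.
rewrite /slack; case: ltP => [ax_lt_d|d_le_ax].
  rewrite max_l ?subr_ge0 ?lef_pV2 ?posrE ?ltW //.
  by rewrite mul1r mulrBl mulVf ?gt_eqF // mulrC.
by rewrite max_r ?subr_le0 ?lef_pV2 ?posrE // !mul0r.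
Qed.

Lemma sum_threshold_cover : \sum_y z y = threshold_value.
Proof.
rewrite /threshold_cover /threshold_value -sum_indicator.
under eq_bigr do rewrite mulrDr -sum_indicator mulr_sumr.
rewrite big_split /= -mulr_suml exchange_big; congr (_ + _).
apply: eq_bigr => x _; rewrite -slack_mulr /Amul mulr_sumr.
by apply: eq_bigr => y _; ring.
Qed.

Lemma sum_dsu_weight_bound w :
  \sum_x (w x * a x / d + ((a x < d)%R)%:R * (1 - a x / d)) =
  (\sum_x w x * a x) / d + \sum_(x | a x < d) (1 - a x / d).
Proof. by rewrite big_split /= -mulr_suml sum_indicator. Qed.

Lemma dsu_feasible_sum_le w :
  dsu_feasible A t w -> \sum_x w x <= threshold_value.
Proof.
case=> w01 wAt_le_t.
have w_le x : w x <= w x * a x / d + ((a x < d)%R)%:R * (1 - a x / d).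
  exact: dsu_weight_le.
apply: le_trans (ler_sum _ (fun x _ => w_le x)) _.
by rewrite sum_dsu_weight_bound lerD2r ler_pM2r ?invr_gt0.
Qed.

Lemma dsu_value_attained : threshold_sandwich ->
  exists2 w, dsu_feasible A t w & \sum_x w x = threshold_value.
Proof.
move=> sandwich; have [l /andP[l_ge0 l_le1] l_fill] :
    exists2 l, 0 <= l <= 1 &
      l * \sum_(x | a x == d) a x = \sum_y t y - \sum_(x | a x < d) a x.
  by apply: exists_unit_scale; rewrite subr_ge0 lerBlDl.
pose w x := ((a x < d)%R)%:R + l * (a x == d)%:R.
have wAt : \sum_x w x * a x = \sum_y t y.
  under eq_bigr do rewrite mulrDl -mulrA.
  rewrite big_split /= -mulr_sumr (sum_indicator (fun x => a x < d)).
  by rewrite sum_indicator l_fill addrC subrK.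
exists w.
  split=> [x|]; last by rewrite wAt.
  rewrite /w; case: ltP => [ax_lt_d|d_le_ax].
    by rewrite lt_eqF // mulr0 addr0 /= ler01 lexx.
  by case: eqP; rewrite add0r ?mulr1 ?mulr0 ?lexx ?ler01 ?l_ge0.
rewrite /threshold_value -wAt -sum_dsu_weight_bound; apply: eq_bigr => x _.
rewrite /w; case: ltP => [ax_lt_d|d_le_ax].
  by rewrite lt_eqF // mulr0 addr0 /= !mul1r addrC subrK.
case: eqP => [->|_]; first by rewrite mulr1 !add0r mul0r addr0 mulfK ?gt_eqF.
by rewrite mulr0 !add0r !mul0r addr0.
Qed.

Lemma p_dsu_threshold_value :
  threshold_sandwich -> p_dsu A t = threshold_value.
Proof.
move=> sandwich; have [w w_feas w_sum] := dsu_value_attained sandwich.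
apply: sup_eq_max => [|_ [w' w'_feas <-]]; first by exists w.
exact: dsu_feasible_sum_le.
Qed.

End ThresholdCover.

Theorem theorem4 (R : realType) (X Y : finType) (A : X -> Y -> bool)
  (t : Y -> R) (d : R) :
  is_channel A ->
  (forall y, 0 <= t y) ->
  (forall x, 0 < Amul A t x) ->
  let Xm := [set x : X | Amul A t x < d] in
  let X0 := [set x : X | Amul A t x == d] in
  \sum_(x in Xm) Amul A t x <= \sum_(y : Y) t y <=
    \sum_(x in Xm) Amul A t x + \sum_(x in X0) Amul A t x ->
  let z := fun y : Y =>
    t y * (d^-1 + \sum_(x : X | A x y) Num.max ((Amul A t x)^-1 - d^-1) 0) in
  [/\ kappa_feasible A z,
      p_dsu A t = \sum_(y : Y) z y,
      (forall y, phi A t y <= z y)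
    & kappa_ldu A t <= p_dsu A t].
Proof.
move=> [_ col_nonempty] t_ge0 At_gt0 Xm X0 sandwich z.
have phi_le y : phi A t y <= z y :=
  phi_le_threshold_cover d t_ge0 At_gt0 (col_nonempty y).
suff [z_feas p_eq] : kappa_feasible A z /\ p_dsu A t = \sum_y z y.
  by split=> //; rewrite /kappa_ldu p_eq; apply: ler_sum => y _.
case: (pickP (fun _ : X => true)) => [x1 _ | X_empty].
  have sandwich' : threshold_sandwich A t d.
    by move: sandwich; rewrite /Xm /X0 !big_set.
  have d_gt0 := threshold_gt0 t_ge0 At_gt0 x1 sandwich'.
  split; first exact: threshold_cover_feasible t_ge0 At_gt0 (ltW d_gt0).
  by rewrite sum_threshold_cover // (p_dsu_threshold_value d_gt0 sandwich').
have X_false (x : X) : False by have := X_empty x.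
have Y_false (y : Y) : False by case: (col_nonempty y) => x _; exact: X_false x.
split; first by split=> [y | x]; [case: (Y_false y) | case: (X_false x)].
by rewrite (p_dsu_eq0 A t_ge0 X_false) big1 // => y; case: (Y_false y).
Qed.
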